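(* For any string $\mathcal S\in\Sigma^n$ and any order-preserving permutation $\pi$ for $\mathcal S$, for every $i>1$ it holds $\mathrm{LPF}_\pi[i]\ge\mathrm{LPF}_\pi[i-1]-1$. In particular, the sequence $i+\mathrm{LPF}_\pi[i]$, for $i=1,\dots,n$, is nondecreasing.
   Context: For $i\ne j$, $\mathrm{rlce}(i,j)$ is the length of the longest common prefix of $\mathcal S[i,n]$ and $\mathcal S[j,n]$. A permutation $\pi:[n]\to[n]$ is order-preserving for $\mathcal S$ if for all $i,j\in[n-1]$, $\pi(i)<\pi(j)$ and $\mathcal S[i,i+1]=\mathcal S[j,j+1]$ imply $\pi(i+1)<\pi(j+1)$. $\mathrm{LPF}_\pi[i]=0$ if $\pi(i)=1$, else $\mathrm{LPF}_\pi[i]=\max_{\pi(j)<\pi(i)}\mathrm{rlce}(j,i)$. *)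

From mathcomp Require Import all_boot all_fingroup.
Set Implicit Arguments. Unset Strict Implicit. Unset Printing Implicit Defensive.

(* Strings S in Sigma^n are n.-tuples over an eqType Sigma; positions are
   0-indexed ordinals 'I_n (position k here = position k+1 in the paper). *)

Fixpoint lcp (Sigma : eqType) (s t : seq Sigma) : nat :=
  match s, t with
  | x :: s', y :: t' => if x == y then (lcp s' t').+1 else 0
  | _, _ => 0
  end.

Definition rlce (Sigma : eqType) (n : nat) (S : n.-tuple Sigma) (i j : 'I_n) : nat :=
  lcp (drop i S) (drop j S).

Definition order_preserving (Sigma : eqType) (n : nat) (S : n.-tuple Sigma)
    (pi : {perm 'I_n}) : Prop :=
  forall (i j i1 j1 : 'I_n), val i1 = i.+1 -> val j1 = j.+1 ->
    pi i < pi j -> tnth S i = tnth S j -> tnth S i1 = tnth S j1 ->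
    pi i1 < pi j1.

Definition LPF (Sigma : eqType) (n : nat) (S : n.-tuple Sigma)
    (pi : {perm 'I_n}) (i : 'I_n) : nat :=
  if val (pi i) == 0 then 0
  else \max_(j : 'I_n | pi j < pi i) rlce S j i.

From mathcomp Require Import all_boot all_fingroup.

Set Implicit Arguments.
Unset Strict Implicit.
Unset Printing Implicit Defensive.

(* If the suffixes at k and j share a prefix of length l >= 2 and
   pi k < pi j, then S[k] = S[j], so order preservation gives
   pi (k+1) < pi (j+1), and the suffixes at k+1 and j+1 share a prefix of
   length l - 1.  Hence LPF[j+1] >= LPF[j] - 1, so m + LPF[m] never
   decreases from one position to the next. *)

Section LongestCommonPrefix.

Variable T : eqType.

Lemma lcp_leq_size (s t : seq T) : lcp s t <= minn (size s) (size t).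
Proof.
elim: s t => [|x s IHs] [|y t] //=.
by case: eqP => _ //; rewrite minnSS ltnS.
Qed.

Lemma lcp_drop (x0 : T) (s : seq T) k j : k < size s -> j < size s ->
  lcp (drop k s) (drop j s) =
  if nth x0 s k == nth x0 s j then (lcp (drop k.+1 s) (drop j.+1 s)).+1 else 0.
Proof. by move=> ks js; rewrite (drop_nth x0 ks) (drop_nth x0 js). Qed.

End LongestCommonPrefix.

Section Rlce.

Variables (Sigma : eqType) (n : nat) (S : n.-tuple Sigma).

Lemma rlce_gt0_tnth (k j : 'I_n) : 0 < rlce S k j -> tnth S k = tnth S j.
Proof.
have x0 : Sigma := tnth S k.
rewrite /rlce !(tnth_nth x0) (lcp_drop x0) ?size_tuple ?ltn_ord //.
by case: eqP.
Qed.

Lemma rlce_succ (k j : 'I_n) : 1 < rlce S k j ->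
  exists k1 j1 : 'I_n,
    [/\ val k1 = k.+1, val j1 = j.+1 & rlce S k j = (rlce S k1 j1).+1].
Proof.
have x0 : Sigma := tnth S k.
rewrite /rlce (lcp_drop x0) ?size_tuple ?ltn_ord //.
case: eqP => // _; rewrite ltnS => lcp_gt0.
have := leq_trans lcp_gt0 (lcp_leq_size _ _).
rewrite leq_min !size_drop !subn_gt0 size_tuple => /andP[k1n j1n].
by exists (Ordinal k1n), (Ordinal j1n).
Qed.

Variable pi : {perm 'I_n}.

Lemma leq_rlce_LPF (k i : 'I_n) : pi k < pi i -> rlce S k i <= LPF S pi i.
Proof.
rewrite /LPF => lt_ki; case: eqP => [pi_i0|_]; first by rewrite pi_i0 in lt_ki.
exact: (leq_bigmax_cond (F := fun k => rlce S k i)).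
Qed.

Lemma LPF_pred_leq : order_preserving S pi ->
  forall i j : 'I_n, val i = j.+1 -> LPF S pi j <= (LPF S pi i).+1.
Proof.
move=> op i j ij; rewrite {1}/LPF; case: eqP => // _.
apply/bigmax_leqP => k lt_kj.
case: (leqP (rlce S k j) 1) => [le1|gt1]; first exact: leq_trans le1 _.
have [k1 [j1 [k1k j1j rlce_kj]]] := rlce_succ gt1.
have j1i : j1 = i by apply: val_inj; rewrite j1j ij.
subst j1.
have S_k1i : tnth S k1 = tnth S i.
  by apply: rlce_gt0_tnth; rewrite -ltnS -rlce_kj.
rewrite rlce_kj ltnS; apply: leq_rlce_LPF.
exact: op k j k1 i k1k ij lt_kj (rlce_gt0_tnth (ltnW gt1)) S_k1i.
Qed.

End Rlce.

Lemma homo_ord_addn (n : nat) (f : 'I_n -> nat) :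
    (forall i j : 'I_n, val i = j.+1 -> f j <= (f i).+1) ->
  {homo (fun i : 'I_n => i + f i) : i j / i <= j}.
Proof.
move=> f_pred i j.
pose g m := if @insub _ _ 'I_n m is Some k then k + f k else 0.
have gE (k : 'I_n) : g k = k + f k by rewrite /g valK.
have homo_g : {in gtn n &, {homo g : p q / p <= q}}.
  apply: homo_leq_in => [p|q p r|p q _ qn r /andP[_ rq]|p pn p1n].
  - exact: leqnn.
  - exact: leq_trans.
  - exact: ltn_trans rq qn.
  - rewrite (gE (Ordinal pn)) (gE (Ordinal p1n)) /= addSnnS leq_add2l.
    exact: f_pred.
by move=> le_ij; rewrite -!gE; apply: homo_g (ltn_ord i) (ltn_ord j) le_ij.
Qed.

Theorem lemma11 (Sigma : eqType) (n : nat) (S : n.-tuple Sigma)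
    (pi : {perm 'I_n}) :
  order_preserving S pi ->
  (forall i j : 'I_n, val i = (val j).+1 -> LPF S pi j - 1 <= LPF S pi i) /\
  (forall i j : 'I_n, i <= j -> i + LPF S pi i <= j + LPF S pi j).
Proof.
move=> op; split; last exact: homo_ord_addn (LPF_pred_leq op).
by move=> i j ij; rewrite leq_subLR add1n; apply: LPF_pred_leq.
Qed.
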